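(* Let $A\subset\mathcal R$ be a closed zone with $w(A)=w$. Then there exist a finite Puiseux series $p(y)=a_1y^{r_1}+\cdots+a_ny^{r_n}$ with $r_i$ positive rationals, $r_1<\cdots<r_n<\frac1w$, real numbers $c_1<c_2$, and two Puiseux series $$\alpha_1=p(y)+c_1y^{\frac1w}+\mathrm{h.o.t.}_{>\frac1w}\in A,\qquad \alpha_2=p(y)+c_2y^{\frac1w}+\mathrm{h.o.t.}_{>\frac1w}\in A.$$ Moreover, for every $c$ with $c_1<c<c_2$, every Puiseux series (arc in $\mathcal R$) of the form $\alpha=p(y)+cy^{\frac1w}+\mathrm{h.o.t.}_{>\frac1w}$ lies in $A$.
   Context: Let $\mathcal R$ be the set of germs at $0$ of analytic arcs $\{x=\alpha(y),\ y\ge 0\}$ in the closed upper half-plane of $\mathbb R^2$, where $\alpha$ is given by a convergent Puiseux series $\alpha(y)=\sum_i c_iy^{p_i}$ with positive rational exponents $p_1<p_2<\cdots$. The order $\mathcal O(\gamma)$ of a Puiseux series is the smallest exponent with nonzero coefficient ($\mathcal O(0)=+\infty$). Write $\alpha<\beta$ if $\alpha(y)<\beta(y)$ for all sufficiently small $y>0$. A subset $A\subset\mathcal R$ is a zone if $\alpha,\beta\in A$, $\alpha<\gamma<\beta$, $\gamma\in\mathcal R$ imply $\gamma\in A$. Distance $d(\alpha,\beta)=1/\mathcal O(\alpha-\beta)$ (with $1/\infty=0$); width $w(A)=\sup\{d(\alpha,\beta):\alpha,\beta\in A\}$. A zone is closed if there exist $\alpha,\beta\in A$ with $d(\alpha,\beta)=w(A)$,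 and open otherwise. $\mathrm{h.o.t.}_{>r}$ denotes a sum of nonzero terms of order strictly greater than $r$. *)

From HB Require Import structures.
From mathcomp Require Import all_boot all_order all_algebra.
From mathcomp Require Import all_classical all_reals all_analysis.
Set Implicit Arguments. Unset Strict Implicit. Unset Printing Implicit Defensive.
Import Order.TTheory GRing.Theory Num.Theory.
Import numFieldNormedType.Exports.
Local Open Scope classical_set_scope.
Local Open Scope ring_scope.

(* A Puiseux series sum_i c_i y^{p_i} is represented by its coefficient
   function  c : rat -> R  (c q = coefficient of y^q).  *)

Section PuiseuxArcs.
Variable R : realType.

Definition exps_in (c : rat -> R) (N : nat) : Prop :=
  (0 < N)%N /\
  forall q : rat, c q != 0 -> exists k : nat, (0 < k)%N /\ q = k%:Q / N%:Q.

Definition pterm (c : rat -> R) (N k : nat) (y : R) : R :=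
  c (k%:Q / N%:Q) * y `^ (ratr (k%:Q / N%:Q)).

(* c is a convergent Puiseux series with positive rational exponents:
   the element of the set \mathcal R (germs of analytic arcs x = alpha(y)) *)
Definition puiseux_arc (c : rat -> R) : Prop :=
  exists N : nat, exps_in c N /\
    exists t : R, 0 < t /\ cvg ([series `|pterm c N k t| ]_k @ \oo).

Definition arc_val (c : rat -> R) (y v : R) : Prop :=
  exists N : nat, exps_in c N /\ ([series pterm c N k y]_k @ \oo --> v).

Definition lt_arc (a b : rat -> R) : Prop :=
  exists2 eps : R, 0 < eps &
    forall y : R, 0 < y < eps ->
      exists u v : R, [/\ arc_val a y u, arc_val b y v & u < v].

Definition is_order (g : rat -> R) (r : rat) : Prop :=
  g r != 0 /\ forall q : rat, g q != 0 -> r <= q.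

(* d(alpha, beta) = 1 / O(alpha - beta), with 1/oo = 0 *)
Definition dist (a b : rat -> R) : R :=
  match pselect (exists r : rat, is_order (a \- b) r) with
  | left H => (ratr (projT1 (cid H)))^-1
  | right _ => 0
  end.

Definition zone (A : set (rat -> R)) : Prop :=
  A `<=` puiseux_arc /\
  forall a b g : rat -> R, A a -> A b -> puiseux_arc g ->
    lt_arc a g -> lt_arc g b -> A g.

Definition width (A : set (rat -> R)) : \bar R :=
  ereal_sup [set (dist ab.1 ab.2)%:E | ab in [set ab | A ab.1 /\ A ab.2]].

Definition closed_zone (A : set (rat -> R)) : Prop :=
  zone A /\ exists a b, [/\ A a, A b & (dist a b)%:E = width A].

End PuiseuxArcs.

From HB Require Import structures.
From mathcomp Require Import all_boot all_order all_algebra.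
From mathcomp Require Import all_classical all_reals all_analysis.
From mathcomp Require Import lra.
Import Order.TTheory GRing.Theory Num.Theory.
Import numFieldNormedType.Exports.
Local Open Scope classical_set_scope.
Local Open Scope ring_scope.

(* Two arcs a, b of A at distance w agree below the exponent e = 1/w and
   differ at y^e, say a(e) < b(e).  A Puiseux series with exponents k/N that
   converges absolutely at some t > 0 agrees with its truncation at exponent
   e up to O(y^d), where d > e is the next multiple of 1/N; hence two arcs
   sharing all terms below e are ordered by their y^e coefficients.  An arc
   p + c y^e + h.o.t. with a(e) < c < b(e) thus lies between a and b, hence
   in the zone A. *)

Lemma big_uniq_eq_support (T : eqType) (V : nmodType) (s1 s2 : seq T)
    (F : T -> V) :
  uniq s1 -> uniq s2 -> (forall x, F x != 0 -> (x \in s1) = (x \in s2)) ->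
  \sum_(x <- s1) F x = \sum_(x <- s2) F x.
Proof.
move=> uniq_s1 uniq_s2 same_support.
have drop0 s : \sum_(x <- s) F x = \sum_(x <- [seq x <- s | F x != 0]) F x.
  by rewrite big_filter [RHS]big_mkcond; apply: eq_bigr => x _; case: eqP.
rewrite drop0 [RHS]drop0; apply/perm_big/uniq_perm; rewrite ?filter_uniq //.
by move=> x; rewrite !mem_filter; case: (boolP (F x != 0)) => //= /same_support.
Qed.

Lemma natq_div_inj {N : nat} :
  (0 < N)%N -> injective (fun k : nat => k%:Q / N%:Q).
Proof.
move=> N_gt0 k k' /(congr1 ( *%R^~ N%:Q)).
by rewrite !divfK ?pnatr_eq0 -?lt0n // => /eqP; rewrite eqr_nat => /eqP.
Qed.

Lemma natq_div_le_cut {e : rat} {N : nat} : 0 <= e -> (0 < N)%N ->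
  exists K : nat, forall k : nat, (k <= K)%N = (k%:Q / N%:Q <= e).
Proof.
move=> e_ge0 N_gt0; exists (Num.truncn (e * N%:Q)) => k.
by rewrite truncn_ge_nat ?mulr_ge0 ?ler0n // ler_pdivrMr ?ltr0n.
Qed.

Section PuiseuxArcOrder.
Context {R : realType}.
Implicit Types (c f g : rat -> R) (e : rat) (y t : R).

Lemma exps_in_gt0 {c N q} : exps_in c N -> c q != 0 -> 0 < q.
Proof. by move=> [N_gt0 exps_c] /exps_c[k [k_gt0 ->]]; rewrite divr_gt0 ?ltr0n. Qed.

Lemma puiseux_arc_support_gt0 {c q} : puiseux_arc c -> c q != 0 -> 0 < q.
Proof. by move=> [N [exps_c _]]; apply: exps_in_gt0 exps_c. Qed.

Definition support_seq_le c e (s : seq rat) : Prop :=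
  {in s, forall q, q <= e} /\ forall q, c q != 0 -> q <= e -> q \in s.

Lemma exists_support_seq_le {c e} :
  puiseux_arc c -> 0 <= e -> exists s, support_seq_le c e s.
Proof.
move=> [N [[N_gt0 exps_c] _]] e_ge0.
have [K cutK] := natq_div_le_cut e_ge0 N_gt0.
exists [seq (k : nat)%:Q / N%:Q | k <- iota 0 K.+1]; split.
  by move=> q /mapP[k]; rewrite mem_iota ltnS cutK => k_le ->.
move=> q cq_neq0 q_le; have [k [_ qE]] := exps_c q cq_neq0.
by apply/mapP; exists k; rewrite // mem_iota ltnS cutK -qE.
Qed.

Lemma pterm_head_sum c N K e y s :
  exps_in c N -> (forall k : nat, (k <= K)%N = (k%:Q / N%:Q <= e)) ->
  uniq s -> support_seq_le c e s ->
  \sum_(0 <= k < K.+1) pterm c N k y = \sum_(q <- s) c q * y `^ ratr q.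
Proof.
move=> [N_gt0 exps_c] cutK uniq_s [s_le s_cover].
rewrite /index_iota subn0 /pterm.
rewrite -(big_map (fun k : nat => k%:Q / N%:Q) xpredT (fun q => c q * y `^ ratr q)).
apply: big_uniq_eq_support => //.
  by rewrite (map_inj_uniq (natq_div_inj N_gt0)) iota_uniq.
move=> q Fq_neq0; have cq_neq0 : c q != 0.
  by apply: contraNneq Fq_neq0 => ->; rewrite mul0r.
have [k [_ qE]] := exps_c q cq_neq0.
rewrite {1}qE (mem_map (natq_div_inj N_gt0)) mem_iota ltnS cutK -qE.
by apply/idP/idP => [/(s_cover q cq_neq0)|/s_le].
Qed.

Lemma pterm_norm_le c N k y t :
  0 <= y <= t -> `|pterm c N k y| <= `|pterm c N k t|.
Proof.
move=> /andP[y_ge0 y_le_t]; have t_ge0 := le_trans y_ge0 y_le_t.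
rewrite /pterm !normrM ler_wpM2l // !norm_powR // !ger0_norm //.
by apply: ge0_ler_powR; rewrite ?nnegrE // ler0q divr_ge0 ?ler0n.
Qed.

Lemma abs_series_cvg_le c N y t : 0 <= y <= t ->
  cvg ([series `|pterm c N k t|]_k @ \oo) ->
  cvg ([series `|pterm c N k y|]_k @ \oo).
Proof.
move=> y_range; apply: series_le_cvg => k /=; rewrite ?normr_ge0 //.
exact: pterm_norm_le.
Qed.

Lemma pterm_norm_scale c N K k y t : 0 < y <= t -> (K < k)%N ->
  `|pterm c N k y| <= (y / t) `^ ratr (K.+1%:Q / N%:Q) * `|pterm c N k t|.
Proof.
move=> /andP[y_gt0 y_le_t] K_lt_k; have t_gt0 := lt_le_trans y_gt0 y_le_t.
set z := y / t; have z_gt0 : 0 < z by rewrite divr_gt0.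
have z_le1 : z <= 1 by rewrite ler_pdivrMr // mul1r.
have -> : y = z * t by rewrite /z divfK // gt_eqF.
rewrite /pterm !normrM (powRM _ (ltW z_gt0) (ltW t_gt0)) normrM.
rewrite !(ger0_norm (powR_ge0 _ _)) mulrCA.
apply: ler_wpM2r; first by rewrite mulr_ge0 ?powR_ge0.
by apply: ger_powR; rewrite ?z_gt0 // ler_rat ler_wpM2r ?invr_ge0 ?ler0n ?ler_nat.
Qed.

Lemma series_tail_le c N K y t u : 0 < y <= t ->
  cvg ([series `|pterm c N k t|]_k @ \oo) ->
  [series pterm c N k y]_k @ \oo --> u ->
  `|u - \sum_(0 <= k < K.+1) pterm c N k y| <=
     lim ([series `|pterm c N k t|]_k @ \oo) * (y / t) `^ ratr (K.+1%:Q / N%:Q).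
Proof.
move=> y_range abs_cvg_t cvg_u.
set L := lim _; set z := (y / t) `^ _.
have partial_le n : (K.+1 <= n)%N ->
    `|[series pterm c N k y]_k n - \sum_(0 <= k < K.+1) pterm c N k y| <= L * z.
  move=> K_lt_n; rewrite [X in _ - X]/(series _ K.+1) sub_series_geq //.
  apply: (le_trans (ler_norm_sum _ _ _)).
  apply: (@le_trans _ _ (\sum_(K.+1 <= k < n) z * `|pterm c N k t|)).
    by apply: ler_sum_nat => k /andP[K_lt_k _]; exact: pterm_norm_scale.
  rewrite -mulr_sumr mulrC ler_wpM2r ?powR_ge0 //.
  apply: (le_trans _ (nondecreasing_cvgn_le _ abs_cvg_t n)); last first.
    by apply: nondecreasing_series => k _ /=; rewrite normr_ge0.
  rewrite /series /= [leRHS](big_cat_nat (n := K.+1)) ?(ltnW K_lt_n) //=.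
  by rewrite lerDr sumr_ge0.
apply: (cvgr_to_le (cvg_norm (cvgB cvg_u (cvg_cst _)))).
by near=> n; apply: partial_le; near: n; exists K.+1.
Unshelve. all: by end_near.
Qed.

Lemma arc_val_truncation {c e} : puiseux_arc c -> 0 <= e ->
  exists t C d, [/\ 0 < t, ratr e < d &
    forall s y, uniq s -> support_seq_le c e s -> 0 < y <= t ->
      exists2 u, arc_val c y u &
        `|u - \sum_(q <- s) c q * y `^ ratr q| <= C * y `^ d].
Proof.
move=> [N [exps_c [t [t_gt0 abs_cvg_t]]]] e_ge0.
have [K cutK] := natq_div_le_cut e_ge0 (proj1 exps_c).
set d : R := ratr (K.+1%:Q / N%:Q).
set L := lim ([series `|pterm c N k t|]_k @ \oo).
exists t, (L / t `^ d), d; split => //; first by rewrite ltr_rat ltNge -cutK ltnn.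
move=> s y uniq_s s_cover y_range.
have cvg_y : cvg ([series pterm c N k y]_k @ \oo).
  apply: normed_cvg; apply: abs_series_cvg_le abs_cvg_t.
  by case/andP: y_range => /ltW -> ->.
exists (lim ([series pterm c N k y]_k @ \oo)); first by exists N.
rewrite -(@pterm_head_sum c N K e y s exps_c cutK uniq_s s_cover).
apply: (le_trans (@series_tail_le c N K y t _ y_range abs_cvg_t cvg_y)).
have y_gt0 : 0 < y by case/andP: y_range.
have -> : y `^ d = (y / t) `^ d * t `^ d.
  by rewrite -powRM ?divfK ?gt_eqF ?divr_ge0 ?ltW.
by rewrite [_ * t `^ d]mulrC mulrA divfK ?gt_eqF ?powR_gt0.
Qed.

Lemma near0_mul_powR_lt (C : R) {D a b : R} : 0 < D -> a < b ->
  exists2 eps : R, 0 < eps & forall y, 0 < y < eps -> C * y `^ b < D * y `^ a.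
Proof.
move=> D_gt0 a_lt_b; set M := `|C| + 1.
have M_gt0 : 0 < M := ltr_wpDl (normr_ge0 C) ltr01.
have ba_gt0 : 0 < b - a by rewrite subr_gt0.
exists ((D / M) `^ (b - a)^-1); first by rewrite powR_gt0 // divr_gt0.
move=> y /andP[y_gt0 y_lt_eps].
have gap_lt : y `^ (b - a) < D / M.
  have <- : ((D / M) `^ (b - a)^-1) `^ (b - a) = D / M.
    by rewrite -powRrM mulVf ?gt_eqF // powRr1 // ltW // divr_gt0.
  by apply: gt0_ltr_powR; rewrite // nnegrE ?powR_ge0 ?(ltW y_gt0).
have -> : y `^ b = y `^ a * y `^ (b - a).
  rewrite -powRD; first by rewrite addrC subrK.
  by rewrite (gt_eqF y_gt0) implybT.
rewrite mulrCA [D * _]mulrC ltr_pM2l ?powR_gt0 //.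
have C_le_M : C <= M by rewrite (le_trans (real_ler_norm (num_real C))) ?lerDl.
apply: (@le_lt_trans _ _ (M * y `^ (b - a))); first by rewrite ler_wpM2r ?powR_ge0.
by rewrite mulrC -ltr_pdivlMr.
Qed.

Lemma first_difference_gt0 {f g e} :
  puiseux_arc f -> puiseux_arc g -> f e < g e -> 0 < e.
Proof.
move=> arc_f arc_g; have [fe0|fe_neq0 _] := eqVneq (f e) 0.
  by rewrite fe0 => /gt_eqF/negbT/(puiseux_arc_support_gt0 arc_g).
exact: puiseux_arc_support_gt0 arc_f fe_neq0.
Qed.

Lemma lt_arc_first_difference f g e :
  puiseux_arc f -> puiseux_arc g -> (forall q, q < e -> f q = g q) ->
  f e < g e -> lt_arc f g.
Proof.
move=> arc_f arc_g agree fe_lt_ge.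
have e_ge0 := ltW (first_difference_gt0 arc_f arc_g fe_lt_ge).
have [tf [Cf [df [tf_gt0 df_gt trunc_f]]]] := arc_val_truncation arc_f e_ge0.
have [tg [Cg [dg [tg_gt0 dg_gt trunc_g]]]] := arc_val_truncation arc_g e_ge0.
have [sf [sf_le sf_cover]] := exists_support_seq_le arc_f e_ge0.
have [sg [sg_le sg_cover]] := exists_support_seq_le arc_g e_ge0.
set s := undup (sf ++ sg).
have s_le : {in s, forall q, q <= e}.
  by move=> q; rewrite mem_undup mem_cat => /orP[/sf_le|/sg_le].
have s_f : support_seq_le f e s.
  by split=> // q fq qe; rewrite mem_undup mem_cat sf_cover.
have s_g : support_seq_le g e s.
  by split=> // q gq qe; rewrite mem_undup mem_cat sg_cover ?orbT.
set D := g e - f e; have D2_gt0 : 0 < D / 2 by rewrite divr_gt0 ?subr_gt0.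
have head_diff y : \sum_(q <- s) g q * y `^ ratr q - \sum_(q <- s) f q * y `^ ratr q
                   = D * y `^ ratr e.
  have e_in_s : e \in s.
    have [fe0|fe_neq0] := eqVneq (f e) 0; last exact: s_f.2.
    by apply: s_g.2; rewrite // gt_eqF // -fe0.
  rewrite -sumrB (bigD1_seq e) ?undup_uniq //= -mulrBl big1_seq ?addr0 //.
  move=> q /andP[q_neq_e q_in_s].
  by rewrite -mulrBl agree ?subrr ?mul0r // lt_neqAle q_neq_e s_le.
have [epsf epsf_gt0 small_f] := near0_mul_powR_lt Cf D2_gt0 df_gt.
have [epsg epsg_gt0 small_g] := near0_mul_powR_lt Cg D2_gt0 dg_gt.
exists (Num.min (Num.min tf tg) (Num.min epsf epsg)).
  by rewrite !lt_min tf_gt0 tg_gt0 epsf_gt0 epsg_gt0.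
move=> y /andP[y_gt0]; rewrite !lt_min => /andP[/andP[y_tf y_tg] /andP[y_ef y_eg]].
have /(trunc_f s y (undup_uniq _) s_f)[u val_u err_u] : 0 < y <= tf.
  by rewrite y_gt0 ltW.
have /(trunc_g s y (undup_uniq _) s_g)[v val_v err_v] : 0 < y <= tg.
  by rewrite y_gt0 ltW.
have /small_f tail_f : 0 < y < epsf by rewrite y_gt0.
have /small_g tail_g : 0 < y < epsg by rewrite y_gt0.
exists u, v; split => //; move: (head_diff y) err_u err_v.
by rewrite !ler_norml; lra.
Qed.

Definition band_in_zone (A : set (rat -> R)) e : Prop :=
  exists p : rat -> R,
    (exists s : seq rat, forall q, p q != 0 -> q \in s) /\
    (forall q, p q != 0 -> 0 < q < e) /\
  exists c1 c2 : R, c1 < c2 /\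
  exists a1 a2 : rat -> R,
    [/\ A a1, (forall q, q < e -> a1 q = p q) & a1 e = c1] /\
    [/\ A a2, (forall q, q < e -> a2 q = p q) & a2 e = c2] /\
    (forall c : R, c1 < c < c2 ->
       forall a : rat -> R, puiseux_arc a ->
         (forall q, q < e -> a q = p q) -> a e = c -> A a).

Lemma band_in_zone_first_difference {A a b e} :
  zone A -> A a -> A b -> (forall q, q < e -> a q = b q) -> a e != b e ->
  band_in_zone A e.
Proof.
move=> zoneA Aa Ab agree ab_neq.
wlog ab_lt : a b Aa Ab agree {ab_neq} / a e < b e.
  move=> wlog_lt; move: ab_neq; rewrite neq_lt => /orP[]; first exact: wlog_lt.
  by apply: wlog_lt => // q /agree.
have [arcA convexA] := zoneA; have [arc_a arc_b] := (arcA _ Aa, arcA _ Ab).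
have e_gt0 := first_difference_gt0 arc_a arc_b ab_lt.
pose p q := if q < e then a q else 0.
have p_support q : p q != 0 -> q < e /\ a q != 0.
  by rewrite /p; case: ifP => [q_lt a_q|_]; rewrite ?eqxx.
exists p; split.
  have [s [_ s_cover]] := exists_support_seq_le arc_a (ltW e_gt0).
  by exists s => q /p_support[q_lt /s_cover]; apply; exact: ltW.
split.
  by move=> q /p_support[-> /(puiseux_arc_support_gt0 arc_a) ->].
exists (a e), (b e); split => //; exists a, b.
split; first by split => // q q_lt; rewrite /p q_lt.
split; first by split => // q q_lt; rewrite /p q_lt agree.
move=> c /andP[ae_lt_c c_lt_be] a' arc_a' a'_head a'e.
apply: (convexA a b a') => //.
  apply: (lt_arc_first_difference a a' e) => //; last by rewrite a'e.
  by move=> q q_lt; rewrite a'_head // /p q_lt.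
apply: (lt_arc_first_difference a' b e) => //; last by rewrite a'e.
by move=> q q_lt; rewrite a'_head // /p q_lt agree.
Qed.

Lemma dist_gt0_order (a b : rat -> R) :
  0 < dist a b -> exists2 r, is_order (a \- b) r & ratr r = (dist a b)^-1.
Proof.
rewrite /dist; case: pselect => [H _|]; last by rewrite ltxx.
by exists (projT1 (cid H)); [exact: projT2 (cid H) | rewrite invrK].
Qed.

Lemma is_order_subP (a b : rat -> R) r :
  is_order (a \- b) r -> (forall q, q < r -> a q = b q) /\ a r != b r.
Proof.
move=> [ab_r r_min]; split; last by rewrite -subr_eq0.
move=> q q_lt; apply/eqP; rewrite -subr_eq0; apply: contraTT q_lt.
by move=> /r_min; rewrite leNgt.
Qed.

End PuiseuxArcOrder.

Theorem lemma5p2 (R : realType) (A : set (rat -> R)) (w : R) :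
  closed_zone A -> width A = w%:E -> 0 < w ->
  exists e : rat, ratr e = w^-1 /\
  exists p : rat -> R,
    (exists s : seq rat, forall q, p q != 0 -> q \in s) /\
    (forall q, p q != 0 -> 0 < q < e) /\
  exists c1 c2 : R, c1 < c2 /\
  exists a1 a2 : rat -> R,
    [/\ A a1, (forall q, q < e -> a1 q = p q) & a1 e = c1] /\
    [/\ A a2, (forall q, q < e -> a2 q = p q) & a2 e = c2] /\
    (forall c : R, c1 < c < c2 ->
       forall a : rat -> R, puiseux_arc a ->
         (forall q, q < e -> a q = p q) -> a e = c -> A a).
Proof.
move=> [zoneA [a [b [Aa Ab dab]]]] wA w_gt0.
have dab_w : dist a b = w by apply: EFin_inj; rewrite dab wA.
have /dist_gt0_order[r ord_r rE] : 0 < dist a b by rewrite dab_w.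
have /is_order_subP[agree ab_neq] := ord_r.
exists r; split; first by rewrite rE dab_w.
exact: band_in_zone_first_difference zoneA Aa Ab agree ab_neq.
Qed.
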